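(* The Kaplan–Meier policy $\pi^{\mathrm{KM}}_{\bm n}$ is piecewise-separable with respect to $\bm x$, with $\mathcal X_0=\emptyset$ and $\mathcal X_k=\{x_1,\dots,x_k\}$ for every $k\in\{1,\dots,K\}$. That is, for each $k\in\{0,\dots,K\}$ there is a continuous (in fact polynomial) function $P_k:[0,1]^k\times[0,1]\to[0,1]$ such that for every $F\in\Delta([0,1])$ and every $z\in[x_k,x_{k+1})$, $$\mathbb P_{\bm D\sim F^n}\big(\pi^{\mathrm{KM}}_{\bm n}(\bm x,\bm I)\le z\big)=P_k\big(F(x_1),\dots,F(x_k),F(z)\big).$$
   Context: Setup: $c_u,c_o>0$, $q=c_u/(c_u+c_o)$. $K\ge1$, $0\le x_1\le\cdots\le x_K\le1$, $x_0:=0$, $x_{K+1}:=1$, $\bm n\in\mathbb N^K$, $n=\sum_k n_k$. $\Delta([0,1])$ = probability distributions on $[0,1]$ identified with right-continuous CDFs. Demands $D^{(k)}_i$ ($k\in[K]$, $i\in[n_k]$) i.i.d. from $F$ ($\bm D\sim F^n$); sales $S^{(k)}_i=\min\{D^{(k)}_i,x_k\}$; indicators $\delta^{(k)}_i=\mathbb 1(D^{(k)}_i\le x_k)$; $\bm I$ the collection of $(S^{(k)}_i,\delta^{(k)}_i)$. Kaplan–Meier policy: let $Y_1\le\cdots\le Y_n$ be the sorted sales values, ties broken by placing uncensored observations ($\delta=1$) before censored ones, and let $\zeta_i=1$ if $Y_i$ is an uncensored observation and $0$ otherwise. Define $\hat F_{\mathrm{KM}}(z)=1-\prod_{i:Y_i\le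 z}\big(\frac{n-i}{n-i+1}\big)^{\zeta_i}$ for $z<1$ and $\hat F_{\mathrm{KM}}(1)=1$, and $\pi^{\mathrm{KM}}_{\bm n}(\bm x,\bm I)=\inf\{u\in[0,1]:\hat F_{\mathrm{KM}}(u)\ge q\}$. Piecewise-separable: a policy $\pi_{\bm n}$ is piecewise-separable w.r.t. $\bm x$ if for each $k\in\{0,\dots,K\}$ there are $\mathcal X_k\subseteq\{x_0,\dots,x_K\}$ and a continuous $P_k:[0,1]^{|\mathcal X_k|}\times[0,1]\to[0,1]$ with $\mathbb P_{\bm D\sim F^n}(\pi_{\bm n}(\bm x,\bm I)\le z)=P_k(F(\mathcal X_k),F(z))$ for all $F\in\Delta([0,1])$ and all $z\in[x_k,x_{k+1})$, where $F(\mathcal X_k)$ is the vector of $F(x_j)$, $x_j\in\mathcal X_k$. *)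

From HB Require Import structures.
From mathcomp Require Import all_boot all_order all_algebra.
From mathcomp Require Import all_classical all_reals all_analysis.
Set Implicit Arguments. Unset Strict Implicit. Unset Printing Implicit Defensive.
Import Order.TTheory GRing.Theory Num.Theory.
Import numFieldNormedType.Exports.
Local Open Scope classical_set_scope.
Local Open Scope ring_scope.

Section Defs.
Variable R : realType.

(* x_j for j = 0..K+1, with the conventions x_0 := 0, x_{K+1} := 1;
   the data x : nat -> R is only read at indices 1..K. *)
Definition xb (K : nat) (x : nat -> R) (j : nat) : R :=
  if j == 0%N then 0 else if (j <= K)%N then x j else 1.

(* thresholds of the n = \sum_k n_k observations, listed group by group:
   n_1 copies of x_1, then n_2 copies of x_2, ..., n_K copies of x_K *)
Definition thresholds (K : nat) (x : nat -> R) (ns : nat -> nat) : seq R :=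
  flatten [seq nseq (ns k) (x k) | k <- iota 1 K].

Definition sales_data (thr : seq R) (D : seq R) : seq (R * bool) :=
  [seq (Num.min d.1 d.2, d.1 <= d.2) | d <- zip D thr].

(* sort by sales value, ties broken with uncensored (delta = true) first *)
Definition km_order (a b : R * bool) : bool :=
  (a.1 < b.1) || ((a.1 == b.1) && (b.2 ==> a.2)).

Definition km_sorted (obs : seq (R * bool)) : seq (R * bool) :=
  sort km_order obs.

(* Kaplan--Meier CDF estimate; index j (0-based) corresponds to i = j+1 *)
Definition KM_cdf (obs : seq (R * bool)) (z : R) : R :=
  let ys := km_sorted obs in
  let n := size ys in
  if z < 1 then
    1 - \prod_(j < n | ((nth (0, false) ys j).1 <= z) && (nth (0, false) ys j).2)
          ((n - j.+1)%:R / (n - j)%:R)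
  else 1.

Definition KM_policy (q : R) (obs : seq (R * bool)) : R :=
  inf [set u : R | 0 <= u <= 1 /\ q <= KM_cdf obs u].

Definition cdf_of (mu : probability R R) (z : R) : R := fine (mu [set` `]-oo, z]]).

(* iterated integral w.r.t. the n-fold product mu^n of a function of
   the sample (D_1, ..., D_n) (written as a list) *)
Fixpoint iint (mu : probability R R) (m : nat) (g : seq R -> \bar R) : \bar R :=
  match m with
  | 0%N => g [::]
  | m.+1 => (\int[mu]_d iint mu m (fun s => g (d :: s)))%E
  end.

Definition prod_prob (mu : probability R R) (m : nat) (A : set (seq R)) : \bar R :=
  iint mu m (fun s => ((\1_A s : R))%:E).

End Defs.

From HB Require Import structures.
From mathcomp Require Import all_boot all_order all_algebra.
From mathcomp Require Import all_classical all_reals all_analysis.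
From mathcomp Require Import zify ring lra.
Import Order.TTheory GRing.Theory Num.Theory.
Import numFieldNormedType.Exports.
Local Open Scope classical_set_scope.
Local Open Scope ring_scope.
Set Implicit Arguments. Unset Strict Implicit. Unset Printing Implicit Defensive.

(* Fix [k] and [z] in [[x_k, x_{k+1})] and cut the line at
   [x_1 <= ... <= x_k <= z].  The policy is at most [z] iff the Kaplan-Meier
   survival product at [z] is at most [1 - q].  That product is unchanged when
   every observation at or below [z] is moved to the index of the cell
   containing it, and every observation above [z] to a single censored point
   past the last cell: this relabelling preserves the order used by the
   estimator, ties included, because censoring levels are cut points.  The
   relabelled data depend on the demands only through their cell indices,
   which are i.i.d. with probabilities [F(x_1), F(x_2) - F(x_1), ..., 1 - F(z)],
   so the probability of the event is a polynomial in
   [F(x_1), ..., F(x_k), F(z)]. *)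

Section KaplanMeier.
Variable R : realType.
Implicit Types (obs : seq (R * bool)) (u z : R).

Definition KM_surv obs z : R :=
  let ys := km_sorted obs in
  let n := size ys in
  \prod_(j < n | ((nth (0, false) ys j).1 <= z) && (nth (0, false) ys j).2)
     ((n - j.+1)%:R / (n - j)%:R).

Lemma KM_cdfE obs z : z < 1 -> KM_cdf obs z = 1 - KM_surv obs z.
Proof. by move=> z1; rewrite /KM_cdf z1. Qed.

Lemma km_order_total : total (@km_order R).
Proof.
move=> [a1 a2] [b1 b2]; rewrite /km_order /=.
case: (ltgtP a1 b1) => [//|//|e]; rewrite ?e ?eqxx ?ltxx /=; by case: a2; case: b2.
Qed.

Lemma km_order_trans : transitive (@km_order R).
Proof.
move=> [b1 b2] [a1 a2] [c1 c2]; rewrite /km_order /=.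
case/orP=> [ab|/andP[/eqP e1 h1]]; case/orP=> [bc|/andP[/eqP e2 h2]].
- by rewrite (lt_trans ab bc).
- by rewrite -e2 ab.
- by rewrite e1 bc.
- by rewrite e1 e2 eqxx ltxx /=; move: h1 h2; case: a2; case: c2; case: b2.
Qed.

Lemma km_order_anti : antisymmetric (@km_order R).
Proof.
move=> [a1 a2] [b1 b2]; rewrite /km_order /=.
case: (ltgtP a1 b1) => [//|//|e]; rewrite ?e ?eqxx /=; by case: a2; case: b2.
Qed.

Lemma km_sorted_map (f : R * bool -> R * bool) obs :
  {in obs &, {homo f : a b / km_order a b}} ->
  km_sorted (map f obs) = map f (km_sorted obs).
Proof.
move=> f_homo; apply: (sorted_eq km_order_trans km_order_anti).
- exact: (sort_sorted km_order_total).
- rewrite sorted_map.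
  have obs_sorted : all [in obs] (km_sorted obs).
    by apply/allP => a; rewrite mem_sort.
  apply: (sub_in_sorted _ obs_sorted (sort_sorted km_order_total obs)).
  by move=> a b ha hb; apply: f_homo.
- by rewrite perm_sort perm_sym perm_map // perm_sort.
Qed.

Lemma KM_surv_map (f : R * bool -> R * bool) obs z z' :
  {in obs &, {homo f : a b / km_order a b}} ->
  {in obs, forall a, ((f a).1 <= z') && (f a).2 = (a.1 <= z) && a.2} ->
  KM_surv (map f obs) z' = KM_surv obs z.
Proof.
move=> f_homo f_event; rewrite /KM_surv km_sorted_map // size_map.
apply: eq_bigl => j; rewrite (nth_map (0, false)) //; apply: f_event.
by rewrite -(mem_sort (@km_order R)); apply: mem_nth.
Qed.

Lemma KM_surv_le obs u v : u <= v -> KM_surv obs v <= KM_surv obs u.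
Proof.
move=> uv; rewrite /KM_surv !(big_mkcond (fun j : 'I_ _ => _ && _)) /=.
apply: ler_prod => j _.
set a := (_ / _).
have /andP[a0 a1] : 0 <= a <= 1.
  rewrite /a divr_ge0 //= ler_pdivrMr ?mul1r ?ler_nat ?ltr0n ?subn_gt0 //; lia.
case: ifP => [_|Yv]; first by rewrite a0 /=; case: ifP => _; rewrite ?lexx.
case: ifP => [/andP[Yu Y2]|_]; last by rewrite ler01 lexx.
by move: Yv; rewrite (le_trans Yu uv) Y2.
Qed.

Lemma exists_gap_above (s : seq R) (z b : R) : z < b ->
  exists m, [/\ z < m, m <= b & forall y, y \in s -> z < y -> m <= y].
Proof.
move=> zb; elim: s => [|y s [m [zm mb m_le]]]; first by exists b.
case: (ltP z y) => zy.
  exists (Num.min m y); split; rewrite ?lt_min ?zm ?zy ?ge_min ?mb //.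
  move=> y'; rewrite inE => /orP[/eqP ->|ys] zy'.
    by rewrite ge_min lexx orbT.
  by rewrite ge_min (m_le _ ys zy').
exists m; split => // y'; rewrite inE => /orP[/eqP ->|ys] zy'.
  by move: (lt_le_trans zy' zy); rewrite ltxx.
exact: m_le.
Qed.

Lemma KM_surv_right_const obs z : z < 1 ->
  exists m, [/\ z < m, m <= 1 &
    forall u, z <= u -> u < m -> KM_surv obs u = KM_surv obs z].
Proof.
move=> z1; have [m [zm m1 m_le]] := exists_gap_above (map fst (km_sorted obs)) z1.
exists m; split => // u zu um; apply: eq_bigl => j.
set Y := nth _ _ _.
suff -> : (Y.1 <= u) = (Y.1 <= z) by [].
apply/idP/idP => [Yu|Yz]; last exact: le_trans Yz zu.
rewrite leNgt; apply/negP => zY.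
have mY : m <= Y.1 by apply: m_le zY; apply/mapP; exists Y => //; exact: mem_nth.
by move: (le_lt_trans Yu um); rewrite ltNge mY.
Qed.

(* Since [KM_cdf] is a right-continuous step function, the infimum defining
   the policy is attained. *)
Lemma KM_policy_leE (q : R) obs z : q <= 1 -> 0 <= z -> z < 1 ->
  (KM_policy q obs <= z) = (q <= 1 - KM_surv obs z).
Proof.
move=> q1 z0 z1.
set S := [set u : R | 0 <= u <= 1 /\ q <= KM_cdf obs u].
have S_lb : has_lbound S by exists 0 => u [/andP[]].
have S1 : S 1 by split; rewrite ?ler01 ?lexx // /KM_cdf ltxx.
apply/idP/idP => [le_z|qz]; last first.
  apply: (ge_inf S_lb); split; first by rewrite z0 ltW.
  by rewrite KM_cdfE.
rewrite leNgt; apply/negP => lt_q.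
have [m [zm m1 surv_const]] := KM_surv_right_const obs z1.
suff : m <= KM_policy q obs.
  by move=> mK; move: (lt_le_trans zm (le_trans mK le_z)); rewrite ltxx.
apply: lb_le_inf; first by exists 1.
move=> u [/andP[u0 _] qu]; rewrite leNgt; apply/negP => um.
have u1 : u < 1 by exact: lt_le_trans um m1.
move: qu; rewrite KM_cdfE // => qu.
have : 1 - KM_surv obs u <= 1 - KM_surv obs z.
  case: (leP z u) => zu; first by rewrite surv_const.
  by rewrite lerD2l lerN2 KM_surv_le // ltW.
by move=> h; move: (le_lt_trans (le_trans qu h) lt_q); rewrite ltxx.
Qed.

End KaplanMeier.

Section CategoricalSample.
Variables (R : realType) (N : nat).

(* The expectation of [Phi] over an i.i.d. sample of size [m] of labels in
   [0, N) with probabilities [pi]; a polynomial in [pi 0, ..., pi N.-1]. *)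
Fixpoint cat_expect (pi : nat -> R) (m : nat) (Phi : seq nat -> R) : R :=
  match m with
  | 0%N => Phi [::]
  | m.+1 => \sum_(j < N) pi j * cat_expect pi m (fun w => Phi (nat_of_ord j :: w))
  end.

Lemma cat_expect_ge0 pi m Phi :
  (forall j, (j < N)%N -> 0 <= pi j) -> (forall w, 0 <= Phi w) ->
  0 <= cat_expect pi m Phi.
Proof.
move=> pi_ge0; elim: m Phi => [|m IH] Phi Phi_ge0 /=; first exact: Phi_ge0.
by apply: sumr_ge0 => j _; rewrite mulr_ge0 ?pi_ge0 ?IH.
Qed.

Lemma cat_expect_le1 pi m Phi :
  (forall j, (j < N)%N -> 0 <= pi j) -> \sum_(j < N) pi j = 1 ->
  (forall w, 0 <= Phi w <= 1) -> cat_expect pi m Phi <= 1.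
Proof.
move=> pi_ge0 pi_sum; elim: m Phi => [|m IH] Phi Phi01 /=.
  by case/andP: (Phi01 [::]).
rewrite -[leRHS]pi_sum; apply: ler_sum => j _.
by rewrite -[leRHS]mulr1 ler_wpM2l ?pi_ge0 ?IH.
Qed.

Lemma eq_cat_expect pi pi' m Phi :
  (forall j, (j < N)%N -> pi j = pi' j) ->
  cat_expect pi m Phi = cat_expect pi' m Phi.
Proof.
move=> eq_pi; elim: m Phi => [|m IH] Phi //=.
by apply: eq_bigr => j _; rewrite eq_pi // IH.
Qed.

Variables (mu : probability R R) (c : R -> nat).
Hypothesis c_lt : forall d, (c d < N)%N.
Hypothesis measurable_c : forall j, measurable [set d | c d = j].

Definition cell_prob j : R := fine (mu [set d | c d = j]).

Lemma cell_prob_ge0 j : 0 <= cell_prob j.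
Proof. exact/fine_ge0/measure_ge0. Qed.

Lemma integral_cell_fun (H : nat -> R) : (forall j, 0 <= H j) ->
  (\int[mu]_d (H (c d))%:E = (\sum_(j < N) cell_prob j * H j)%:E)%E.
Proof.
move=> H_ge0.
have H_split d : (H (c d))%:E =
    (\sum_(j < N) ((H j)%:E * (\1_[set d | c d = j] d)%:E))%E.
  rewrite (bigD1 (Ordinal (c_lt d))) //= big1 ?adde0.
    by rewrite indicE mem_set //= mule1.
  move=> j /eqP cj; rewrite indicE memNset ?mule0 //= => e.
  by apply: cj; apply: val_inj.
under eq_integral do rewrite H_split.
rewrite ge0_integral_sum //; last first.
- by move=> j d _; rewrite mule_ge0 // lee_fin.
- move=> j; apply/measurable_realfun.measurable_EFinP.
  apply: measurable_realfun.measurable_funM; first exact: measurable_cst.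
  exact: measurable_realfun.measurable_indic.
rewrite -sumEFin; apply: eq_bigr => j _.
rewrite ge0_integralZl_EFin //; last first.
  by apply/measurable_realfun.measurable_EFinP; exact: measurable_realfun.measurable_indic.
by rewrite integral_indic // setIT /cell_prob EFinM fineK ?fin_num_measure // muleC.
Qed.

Lemma iint_cell_fun m (g : seq R -> \bar R) (Phi : seq nat -> R) :
  (forall w, 0 <= Phi w) ->
  (forall s, size s = m -> g s = (Phi (map c s))%:E) ->
  iint mu m g = (cat_expect cell_prob m Phi)%:E.
Proof.
elim: m g Phi => [|m IH] g Phi Phi_ge0 gE /=; first by rewrite gE.
transitivity (\int[mu]_d (cat_expect cell_prob m (fun w => Phi (c d :: w)))%:E)%E.
  by apply: eq_integral => d _; apply: IH => // s hs; rewrite gE //= hs.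
rewrite (@integral_cell_fun (fun j => cat_expect cell_prob m (fun w => Phi (j :: w)))) //.
by move=> j; apply: cat_expect_ge0 => // i _; exact: cell_prob_ge0.
Qed.

End CategoricalSample.

Section CellWeights.
Variable R : realType.

(* [v] and [t] stand for [F(x_1), ..., F(x_k)] and [F(z)]. *)
Definition cut_cdf (k : nat) (v : 'rV[R]_k) (t : R) (j : nat) : R :=
  if (insub j : option 'I_k) is Some i then v ord0 i else if j == k then t else 1.

Definition cell_weight (k : nat) (v : 'rV[R]_k) (t : R) (j : nat) : R :=
  if j is j'.+1 then cut_cdf v t j'.+1 - cut_cdf v t j' else cut_cdf v t 0.

Lemma sum_cell_weight k (v : 'rV[R]_k) t m :
  \sum_(j < m.+1) cell_weight v t j = cut_cdf v t m.
Proof.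
elim: m => [|m IH]; first by rewrite big_ord1.
by rewrite big_ord_recr IH /=; ring.
Qed.

Lemma cut_cdf_out k (v : 'rV[R]_k) t j : (k < j)%N -> cut_cdf v t j = 1.
Proof.
move=> kj; rewrite /cut_cdf insubN ?gtn_eqF //.
by rewrite -leqNgt ltnW.
Qed.

Lemma sum_cell_weight_all k (v : 'rV[R]_k) t :
  \sum_(j < k.+2) cell_weight v t j = 1.
Proof. by rewrite sum_cell_weight cut_cdf_out. Qed.

Definition clamp01 (y : R) : R := Num.max 0 (Num.min 1 y).

Lemma clamp01_id y : 0 <= y <= 1 -> clamp01 y = y.
Proof. by case/andP=> y0 y1; rewrite /clamp01 (min_idPr y1) (max_idPr y0). Qed.

Lemma clamp01_bnd y : 0 <= clamp01 y <= 1.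
Proof. by rewrite /clamp01 le_max lexx /= ge_max ler01 ge_min lexx. Qed.

Lemma continuous_clamp01 (T : topologicalType) (F : T -> R) :
  continuous F -> continuous (fun p => clamp01 (F p)).
Proof.
move=> F_cont p; apply: (@continuous_max _ _ (fun=> 0) (fun p => Num.min 1 (F p))).
  exact: cst_continuous.
by apply: (@continuous_min _ _ (fun=> 1) F); [exact: cst_continuous | exact: F_cont].
Qed.

Lemma continuous_sum (T : topologicalType) (I : Type) (s : seq I)
    (F : I -> T -> R) :
  (forall j, continuous (F j)) -> continuous (fun p => \sum_(j <- s) F j p).
Proof.
move=> F_cont; elim: s => [|j s IH].
  by under eq_fun do rewrite big_nil; exact: cst_continuous.
under eq_fun do rewrite big_cons.
by move=> p; apply: continuousD; [exact: F_cont | exact: IH].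
Qed.

Lemma continuous_cut_cdf k j : continuous (fun p : 'rV[R]_k * R => cut_cdf p.1 p.2 j).
Proof.
rewrite /cut_cdf; case: (insub j) => [i|]; last first.
  by case: (j == k); [move=> p; exact: cvg_snd | exact: cst_continuous].
move=> p; apply: (@continuous_comp _ _ _ fst (fun M : 'rV[R]_k => M ord0 i)).
  exact: cvg_fst.
exact: coord_continuous.
Qed.

Lemma continuous_cell_weight k j :
  continuous (fun p : 'rV[R]_k * R => cell_weight p.1 p.2 j).
Proof.
case: j => [|j] /=; first exact: continuous_cut_cdf.
by move=> p; exact (continuousB (@continuous_cut_cdf _ j.+1 p) (@continuous_cut_cdf _ j p)).
Qed.

Lemma continuous_cat_expect k N m Phi :
  continuous (fun p : 'rV[R]_k * R => cat_expect N (cell_weight p.1 p.2) m Phi).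
Proof.
elim: m Phi => [|m IH] Phi /=; first exact: cst_continuous.
apply: continuous_sum => j p.
exact (continuousM (@continuous_cell_weight _ j p) (IH _ p)).
Qed.

End CellWeights.

Section Cells.
Variables (R : realType) (K k : nat) (x : nat -> R) (z : R).
Hypothesis k_le_K : (k <= K)%N.
Hypothesis x1_ge0 : 0 <= x 1%N.
Hypothesis x_homo : forall i j : nat, (1 <= i)%N -> (i <= j)%N -> (j <= K)%N -> x i <= x j.
Hypothesis xK_le1 : x K <= 1.
Hypothesis z_mem : xb K x k <= z < xb K x k.+1.

Definition cut (j : nat) : R := if (j < k)%N then x j.+1 else z.

(* The cell of [d] among [(-oo, cut 0], (cut 0, cut 1], ..., (cut k, +oo)]. *)
Definition cell (d : R) : nat := (\sum_(i < k.+1) (cut i < d)%R)%N.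

Lemma x_le_z : (1 <= k)%N -> x k <= z.
Proof.
move=> k1; case/andP: z_mem => + _.
by rewrite /xb (negbTE (lt0n_neq0 k1)) k_le_K.
Qed.

Lemma z_lt_x g : (k < g)%N -> (g <= K)%N -> z < x g.
Proof.
move=> kg gK; case/andP: z_mem => _; rewrite /xb /= (leq_trans kg gK) => zx.
by apply: (lt_le_trans zx); apply: x_homo.
Qed.

Lemma z_lt1 : z < 1.
Proof.
case/andP: z_mem => _; rewrite /xb /=; case: ifP => // kK zx.
by apply: (lt_le_trans zx); apply: (le_trans _ xK_le1); apply: x_homo.
Qed.

Lemma z_ge0 : 0 <= z.
Proof.
case/andP: z_mem => + _; apply: le_trans; rewrite /xb.
case: eqP => // /eqP k0; rewrite k_le_K; apply: (le_trans x1_ge0).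
by apply: x_homo; rewrite // lt0n.
Qed.

Lemma cut_homo i j : (i <= j)%N -> cut i <= cut j.
Proof.
rewrite /cut => ij; case: ifP => ik; case: ifP => jk //.
- by apply: x_homo => //; lia.
- by apply: le_trans (x_le_z _); [apply: x_homo | ]; lia.
- by move: (leq_ltn_trans ij jk); rewrite ik.
Qed.

Lemma sum_ord_ltn (n j : nat) : (\sum_(i < n) (i < j)%N)%N = minn j n.
Proof.
elim: n => [|n IH]; first by rewrite big_ord0 minn0.
by rewrite big_ord_recr /= IH; case: (ltnP n j) => /=; lia.
Qed.

Lemma cell_le j d : (j <= k)%N -> (cell d <= j)%N = (d <= cut j).
Proof.
move=> jk; apply/idP/idP => [cell_j|d_cut].
  rewrite leNgt; apply/negP => cut_d.
  suff : (j.+1 <= cell d)%N by lia.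
  have -> : j.+1 = minn j.+1 k.+1 by lia.
  rewrite -sum_ord_ltn; apply: leq_sum => i _.
  case: (ltnP i j.+1) => //= ij.
  by rewrite (le_lt_trans (@cut_homo i j ij) cut_d).
have -> : j = minn j k.+1 by lia.
rewrite -sum_ord_ltn; apply: leq_sum => i _.
case: (ltP (cut i) d) => //= cut_i; case: (ltnP i j) => // ji.
by move: (lt_le_trans cut_i (le_trans d_cut (cut_homo ji))); rewrite ltxx.
Qed.

Lemma cell_le_Sk d : (cell d <= k.+1)%N.
Proof.
rewrite -[X in (_ <= X)%N](minnn k.+1) -sum_ord_ltn; apply: leq_sum => i _.
by rewrite ltn_ord; case: (_ < _).
Qed.

Lemma cell_homo d d' : d <= d' -> (cell d <= cell d')%N.
Proof.
move=> dd'; apply: leq_sum => i _.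
by case: (ltP (cut i) d) => //= cut_d; rewrite (lt_le_trans cut_d dd').
Qed.

Lemma cell_le_k d : (cell d <= k)%N = (d <= z).
Proof. by rewrite cell_le // /cut ltnn. Qed.

Definition cut_rank (g : nat) : nat := (\sum_(j < k) (x j.+1 < x g)%R)%N.

Lemma cell_x g : (1 <= g <= k)%N -> cell (x g) = cut_rank g.
Proof.
move=> g_mem; rewrite /cell big_ord_recr /= {2}/cut ltnn.
have -> : (z < x g) = false.
  by apply/negbTE; rewrite -leNgt; apply: le_trans (x_le_z _); [apply: x_homo | ]; lia.
by rewrite addn0 /cut_rank; apply: eq_bigr => i _; rewrite /cut /= ltn_ord.
Qed.

Definition groups (ns : nat -> nat) : seq nat :=
  flatten [seq nseq (ns g) g | g <- iota 1 K].

Lemma thresholds_groups ns : thresholds K x ns = map x (groups ns).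
Proof.
rewrite /thresholds /groups map_flatten -map_comp; congr flatten.
by apply: eq_map => g /=; rewrite map_nseq.
Qed.

Lemma mem_groups ns g : g \in groups ns -> (1 <= g <= K)%N.
Proof.
case/flattenP => s /mapP [g' g'_mem ->] /nseqP [-> _].
by move: g'_mem; rewrite mem_iota; lia.
Qed.

(* The observation [(min d (x g), d <= x g)] of a demand in cell [i] from group
   [g], up to a relabelling of the line that preserves the order of the cut
   points; censoring beyond [z] is sent to the common point [k + 1]. *)
Definition cell_obs (ig : nat * nat) : R * bool :=
  let: (i, g) := ig in
  if (i <= minn g.-1 k)%N then (i%:R, true)
  else if (g <= k)%N then ((cut_rank g)%:R, false) else (k.+1%:R, false).

Definition cell_data ns (w : seq nat) : seq (R * bool) :=
  map cell_obs (zip w (groups ns)).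

Definition relabel (a : R * bool) : R * bool :=
  if a.1 <= z then ((cell a.1)%:R, a.2) else (k.+1%:R, false).

Lemma relabel_sales g d : (1 <= g <= K)%N ->
  relabel (Num.min d (x g), d <= x g) = cell_obs (cell d, g).
Proof.
move=> g_mem; rewrite /relabel /cell_obs /=.
case: (leqP g k) => gk.
  have -> : minn g.-1 k = g.-1 by lia.
  have cut_g : cut g.-1 = x g by rewrite /cut ifT; [congr x | ]; lia.
  have xg_z : x g <= z by apply: le_trans (x_le_z _); [apply: x_homo | ]; lia.
  rewrite cell_le ?cut_g; last by lia.
  case: (leP d (x g)) => dx; first by rewrite (le_trans dx xg_z).
  by rewrite xg_z cell_x //; lia.
have -> : minn g.-1 k = k by lia.
rewrite cell_le_k.
have zx : z < x g by apply: z_lt_x => //; lia.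
case: (leP d z) => dz.
  by rewrite (min_idPl (le_trans dz (ltW zx))) dz (le_trans dz (ltW zx)).
by rewrite leNgt lt_min dz zx.
Qed.

Lemma map_relabel_sales_data (G : seq nat) (D : seq R) : size D = size G ->
  (forall g, g \in G -> (1 <= g <= K)%N) ->
  map relabel (sales_data (map x G) D) = map cell_obs (zip (map cell D) G).
Proof.
elim: G D => [|g G IH] [|d D] //= [sizeD] G_mem.
rewrite /sales_data /= in IH *.
rewrite relabel_sales ?G_mem ?mem_head //; congr cons.
by apply: IH => // g' g'G; apply: G_mem; rewrite inE g'G orbT.
Qed.

Definition censored_at_cut (a : R * bool) : Prop :=
  a.2 = false -> a.1 <= z -> exists g, (1 <= g <= k)%N /\ a.1 = x g.

Lemma sales_censored_at_cut g d : (1 <= g <= K)%N ->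
  censored_at_cut (Num.min d (x g), d <= x g).
Proof.
move=> g_mem; rewrite /censored_at_cut /= => /negbT; rewrite -ltNge => xd.
rewrite (min_idPr (ltW xd)) => xz; exists g; split => //.
case/andP: g_mem => -> gK /=; rewrite leqNgt; apply/negP => kg.
by move: (lt_le_trans (z_lt_x kg gK) xz); rewrite ltxx.
Qed.

Lemma sales_data_censored_at_cut (G : seq nat) (D : seq R) :
  (forall g, g \in G -> (1 <= g <= K)%N) ->
  {in sales_data (map x G) D, forall a, censored_at_cut a}.
Proof.
elim: G D => [|g G IH] [|d D] //= G_mem a.
rewrite /sales_data /= in IH *; rewrite inE => /orP [/eqP ->|a_mem].
  by apply: sales_censored_at_cut; apply: G_mem; rewrite mem_head.
by apply: (IH D) => // g' g'G; apply: G_mem; rewrite inE g'G orbT.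
Qed.

Lemma relabel_event a :
  ((relabel a).1 <= k%:R) && (relabel a).2 = (a.1 <= z) && a.2.
Proof.
by rewrite /relabel; case: ifP => az /=; rewrite ?ler_nat ?cell_le_k ?az ?andbF.
Qed.

(* Ties are the delicate case: a censored observation sits at a cut point
   [x g], so a strictly larger uncensored value lies in a strictly larger cell. *)
Lemma relabel_km_order a b :
  censored_at_cut a -> km_order a b -> km_order (relabel a) (relabel b).
Proof.
case: a => a1 a2; case: b => b1 b2; rewrite /censored_at_cut /relabel /km_order /=.
move=> a_cut ab_order.
have ab : a1 <= b1 by case/orP: ab_order => [/ltW //|/andP[/eqP -> _]].
case: (leP a1 z) => az; case: (leP b1 z) => bz; last first.
- by rewrite eqxx ltxx.
- by move: (le_lt_trans (le_trans ab bz) az); rewrite ltxx.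
- by rewrite ltr_nat ltnS cell_le_k az.
case/orP: ab_order => [lt_ab|/andP[/eqP e h]]; last by rewrite e eqxx h ltxx orbT.
case: a2 a_cut => a_cut.
  have := cell_homo (ltW lt_ab); rewrite leq_eqVlt => /orP[/eqP ->|lt_cell].
    by rewrite eqxx implybT ltxx orbT.
  by rewrite ltr_nat lt_cell.
have [g [g_mem xg]] := a_cut erefl az.
have cut_g : cut g.-1 = a1 by rewrite xg /cut ifT ?prednK //; lia.
have cell_a : (cell a1 <= g.-1)%N by rewrite cell_le ?cut_g //; lia.
have cut_a : cut (cell a1) <= a1 by rewrite -{2}cut_g cut_homo.
have : ~~ (cell b1 <= cell a1)%N.
  by rewrite cell_le ?cell_le_k // -ltNge (le_lt_trans cut_a lt_ab).
by rewrite -ltnNge ltr_nat => ->.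
Qed.

Lemma KM_policy_le_cellsE (q : R) ns (D : seq R) : q <= 1 ->
  size D = size (groups ns) ->
  (KM_policy q (sales_data (thresholds K x ns) D) <= z) =
  (q <= 1 - KM_surv (cell_data ns (map cell D)) k%:R).
Proof.
move=> q1 sizeD; rewrite thresholds_groups KM_policy_leE ?z_ge0 ?z_lt1 //.
have G_mem := @mem_groups ns.
rewrite /cell_data -map_relabel_sales_data // (KM_surv_map (z := z)) //.
- by move=> a b a_mem _; apply: relabel_km_order; apply: sales_data_censored_at_cut a_mem.
- by move=> a _; exact: relabel_event.
Qed.

Definition KM_cell_event (q : R) ns (w : seq nat) : R :=
  if q <= 1 - KM_surv (cell_data ns w) k%:R then 1 else 0.

Lemma KM_cell_event_bnd q ns w : 0 <= KM_cell_event q ns w <= 1.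
Proof. by rewrite /KM_cell_event; case: ifP; rewrite ?lexx ?ler01. Qed.

Variable mu : probability R R.

Local Notation cdf_cuts := (\row_(i < k) cdf_of mu (x i.+1)).

Lemma cell_le_itv j : (j <= k)%N -> [set d | (cell d <= j)%N] = [set` `]-oo, cut j]].
Proof. by move=> jk; apply/seteqP; split => d /=; rewrite in_itv /= cell_le. Qed.

Lemma cell_le_setT j : (k < j)%N -> [set d | (cell d <= j)%N] = setT.
Proof.
by move=> kj; apply/seteqP; split => d //= _; apply: leq_trans (cell_le_Sk d) kj.
Qed.

Lemma measurable_cell_le j : measurable [set d | (cell d <= j)%N].
Proof.
case: (leqP j k) => jk; last by rewrite cell_le_setT.
by rewrite cell_le_itv //; exact: measurable_itv.
Qed.

Lemma cell_eq0 : [set d | cell d = 0%N] = [set d | (cell d <= 0)%N].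
Proof. by apply/seteqP; split => d /=; [move=> -> | rewrite leqn0 => /eqP]. Qed.

Lemma cell_eqS j :
  [set d | cell d = j.+1] = [set d | (cell d <= j.+1)%N] `\` [set d | (cell d <= j)%N].
Proof.
apply/seteqP; split => d /=; first by move=> ->; rewrite ltnn.
by case=> le_Sj /negP; rewrite -ltnNge => lt_j; apply/eqP; rewrite eqn_leq le_Sj.
Qed.

Lemma measurable_cell j : measurable [set d | cell d = j].
Proof.
case: j => [|j]; first by rewrite cell_eq0; exact: measurable_cell_le.
by rewrite cell_eqS; apply: measurableD; exact: measurable_cell_le.
Qed.

Lemma measure_cell_le j : (j <= k.+1)%N ->
  fine (mu [set d | (cell d <= j)%N]) = cut_cdf cdf_cuts (cdf_of mu z) j.
Proof.
move=> jk; rewrite /cut_cdf; case: insubP => [i ik vi|jk'].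
  rewrite mxE cell_le_itv; last exact: ltnW.
  by rewrite /cdf_of /cut ik vi.
move: jk; rewrite leq_eqVlt => /orP[/eqP ->|].
  by rewrite cell_le_setT // eqn_leq ltnn probability_setT.
rewrite ltnS leq_eqVlt => /orP[/eqP ->|jk]; last by move: jk'; rewrite jk.
by rewrite eqxx cell_le_itv // /cdf_of /cut ltnn.
Qed.

Lemma cell_prob_weight j : (j < k.+2)%N ->
  cell_prob mu cell j = cell_weight cdf_cuts (cdf_of mu z) j.
Proof.
rewrite /cell_prob; case: j => [|j] jk /=; first by rewrite cell_eq0 measure_cell_le.
have fin_le i : mu [set d | (cell d <= i)%N] \is a fin_num.
  by apply: fin_num_measure; exact: measurable_cell_le.
rewrite cell_eqS measureD ?ltey_eq ?fin_le //; try exact: measurable_cell_le.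
rewrite setIidr; last by move=> d /= /leqW.
by rewrite fineB ?fin_le // !measure_cell_le //; lia.
Qed.

Lemma cell_weight_cdf_ge0 j : (j < k.+2)%N ->
  0 <= cell_weight cdf_cuts (cdf_of mu z) j.
Proof. by move=> jk; rewrite -cell_prob_weight // cell_prob_ge0. Qed.

Lemma prod_prob_KM_policy_le (q : R) ns : q <= 1 ->
  prod_prob mu (size (thresholds K x ns))
    [set D | KM_policy q (sales_data (thresholds K x ns) D) <= z] =
  (cat_expect k.+2 (cell_weight cdf_cuts (cdf_of mu z))
     (size (thresholds K x ns)) (KM_cell_event q ns))%:E.
Proof.
move=> q1; have cell_lt d : (cell d < k.+2)%N by rewrite ltnS cell_le_Sk.
rewrite -(@eq_cat_expect _ _ (cell_prob mu cell)); last by move=> j /cell_prob_weight.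
rewrite /prod_prob; apply: (iint_cell_fun mu cell_lt measurable_cell) => [w|s size_s].
  by case/andP: (KM_cell_event_bnd q ns w).
rewrite /KM_cell_event -KM_policy_le_cellsE //; last first.
  by rewrite size_s thresholds_groups size_map.
rewrite indicE; case: ifP => D_event; first by rewrite mem_set.
by rewrite memNset //= => /negP; rewrite D_event.
Qed.

End Cells.

Unset Implicit Arguments.
Theorem lemma6 (R : realType) (cu co : R) (K : nat) (x : nat -> R)
    (ns : nat -> nat) :
  0 < cu -> 0 < co -> (1 <= K)%N ->
  0 <= x 1%N ->
  (forall i j : nat, (1 <= i)%N -> (i <= j)%N -> (j <= K)%N -> x i <= x j) ->
  x K <= 1 ->
  let q := cu / (cu + co) in
  let thr := thresholds K x ns in
  forall k : nat, (k <= K)%N ->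
  exists P : 'rV[R]_k -> R -> R,
    {within [set p : 'rV[R]_k * R |
               (forall j, 0 <= p.1 ord0 j <= 1) /\ 0 <= p.2 <= 1],
       continuous (fun p : 'rV[R]_k * R => P p.1 p.2)} /\
    (forall (v : 'rV[R]_k) (t : R), (forall j, 0 <= v ord0 j <= 1) ->
       0 <= t <= 1 -> 0 <= P v t <= 1) /\
    (forall mu : probability R R, mu [set` `[0, 1]] = 1%E ->
     forall z : R, xb K x k <= z < xb K x k.+1 ->
       prod_prob mu (size thr)
         [set D : seq R | KM_policy q (sales_data thr D) <= z]
       = (P (\row_(j < k) cdf_of mu (x j.+1)) (cdf_of mu z))%:E).
Proof.
move=> cu_gt0 co_gt0 _ x1_ge0 x_homo xK_le1 q thr k k_le_K.
have q_le1 : q <= 1 by rewrite /q ler_pdivrMr ?mul1r ?lerDl ?ltW ?addr_gt0.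
(* The clamp only matters off the image of the CDFs, where the weights can be negative. *)
exists (fun v t =>
  clamp01 (cat_expect k.+2 (cell_weight v t) (size thr) (KM_cell_event K k x q ns))).
split; [|split].
- by apply: continuous_subspaceT; apply: continuous_clamp01; exact: continuous_cat_expect.
- by move=> v t _ _; exact: clamp01_bnd.
move=> mu _ z z_mem.
rewrite (prod_prob_KM_policy_le k_le_K x1_ge0 x_homo xK_le1 z_mem) // clamp01_id //.
have weight_ge0 := cell_weight_cdf_ge0 k_le_K x1_ge0 x_homo xK_le1 z_mem mu.
have event_ge0 w : 0 <= KM_cell_event K k x q ns w by case/andP: (KM_cell_event_bnd K k x q ns w).
by rewrite cat_expect_ge0 ?cat_expect_le1 ?sum_cell_weight_all //; exact: KM_cell_event_bnd.
Qed.
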